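(* Let $G$ be a finite group, let $\operatorname{Irr}_\mathbb{R}(G)$ denote the set of irreducible complex characters of $G$ that are real-valued, and let $k_r(G)=|\operatorname{Irr}_\mathbb{R}(G)|$, which equals the number of real conjugacy classes of $G$. For $n\in\mathbb{N}$ put \[s(n):=|\{(g_1,\ldots,g_n)\in G^n:\ g_1^2g_2^2\cdots g_n^2=1\}|.\] Then the multiset $\{\chi(1)\epsilon(\chi):\chi\in\operatorname{Irr}_\mathbb{R}(G)\}$ is uniquely determined by $|G|$ and the numbers $s(1),s(2),\ldots,s(k_r(G)+1)$. Precisely: if $H$ is another finite group with $|H|=|G|$, $k_r(H)=k_r(G)$ and $s_H(n)=s_G(n)$ for $n=1,\ldots,k_r(G)+1$, then the multisets $\{\chi(1)\epsilon(\chi):\chi\in\operatorname{Irr}_\mathbb{R}(G)\}$ and $\{\psi(1)\epsilon(\psi):\psi\in\operatorname{Irr}_\mathbb{R}(H)\}$ coincide. In particular, $k_r(G)=\frac{s(2)}{|G|}$, and hence the number of irreducible characters of $G$ with Frobenius--Schur indicator $1$ is determined by $|G|$ and the numbers $s(n)$, $n\ge 1$.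
   Context: For an irreducible complex character $\chi$ of a finite group $G$, the Frobenius--Schur indicator is $\epsilon(\chi):=\frac{1}{|G|}\sum_{g\in G}\chi(g^2)\in\{0,1,-1\}$; it is nonzero exactly when $\chi$ is real-valued. A conjugacy class $C$ of $G$ is real if $C=\{x^{-1}:x\in C\}$. Multisets are counted with multiplicity. *)

From HB Require Import structures.
From mathcomp Require Import all_boot all_order all_algebra all_fingroup all_solvable all_field all_character.
Set Implicit Arguments. Unset Strict Implicit. Unset Printing Implicit Defensive.
Import GRing.Theory Num.Theory.
Local Open Scope ring_scope.

Definition FSind (gT : finGroupType) (G : {group gT}) (chi : 'CF(G)) : algC :=
  (#|G|%:R)^-1 * \sum_(g in G) chi (g ^+ 2)%g.

Definition IrrR (gT : finGroupType) (G : {group gT}) : {set Iirr G} :=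
  [set i : Iirr G | cfReal 'chi[G]_i].

Definition kr (gT : finGroupType) (G : {group gT}) : nat := #|IrrR G|.

Definition sq_count (gT : finGroupType) (G : {group gT}) (n : nat) : nat :=
  #|[set t : {ffun 'I_n -> gT} |
      [forall i, t i \in G] && ((\prod_(i < n) (t i) ^+ 2)%g == 1%g)]|.

(* The multiset {chi(1) eps(chi) : chi in Irr_R(G)} as a sequence
   (to be compared up to permutation). *)
Definition degFS (gT : finGroupType) (G : {group gT}) : seq algC :=
  [seq 'chi[G]_i 1%g * FSind 'chi[G]_i | i in IrrR G].

(* Counting the solutions of g_1^2 ... g_m^2 = g with characters gives
   |G| s(m) = sum_chi chi(1)^2 (eps(chi) |G| / chi(1))^m: on an irreducible
   representation rho, sum_x rho(x)^2 is the scalar eps(chi) |G| / chi(1) by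
   Schur's lemma, and eps(chi) vanishes for non-real chi while for real chi it
   is the sign +-1 of the (unique up to scalar) invariant bilinear form, which
   is symmetric or alternating.  With y_chi = chi(1) eps(chi) over the real
   chi, this reads |G| s(m) = sum y_chi^2 (|G| / y_chi)^m, so s(1) is the sum
   of the y_chi, s(2) = k_r(G) |G|, and s(m+2) gives the inverse power sums
   sum y_chi^-m.  Finally, k nonzero numbers with nonzero sum are determined by
   that sum and their inverse power sums of orders 1, ..., k-1: these give the
   logarithmic derivative of prod (X - y) modulo X^(k-1), which in
   characteristic 0 fixes the coefficients of degree < k up to a common factor,
   and the sum (the coefficient of degree k-1) fixes that factor. *)

From HB Require Import structures.
From mathcomp Require Import all_boot all_order all_algebra all_fingroup all_solvable all_field all_character.
From mathcomp Require Import ring.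
Set Implicit Arguments. Unset Strict Implicit. Unset Printing Implicit Defensive.
Import GRing.Theory Num.Theory.
Local Open Scope ring_scope.

Section InversePowerSums.
Variable F : fieldType.
Hypothesis charF0 : [pchar F] =i pred0.
Implicit Types (s : seq F) (P Q T : {poly F}).

Definition roots_poly s : {poly F} := \prod_(y <- s) ('X - y%:P).

(* The truncation mod 'X^K of minus the logarithmic derivative of roots_poly s. *)
Definition logder_series K s : {poly F} :=
  \sum_(i < K) (\sum_(y <- s) y ^- i.+1) *: 'X^i.

Lemma logder_series_cons K y s :
  logder_series K (y :: s) = logder_series K [:: y] + logder_series K s.
Proof.
rewrite /logder_series -big_split /=; apply: eq_bigr => i _.
by rewrite big_cons big_seq1 scalerDl.
Qed.

Lemma mulXsubC_logder_series K y :
  y != 0 -> ('X - y%:P) * logder_series K [:: y] = y ^- K *: 'X^K - 1.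
Proof.
move=> y_neq0; pose f i := y ^- i *: 'X^i : {poly F}.
have -> : y ^- K *: 'X^K - 1 = \sum_(0 <= i < K) (f i.+1 - f i).
  by rewrite telescope_sumr // /f expr0 invr1 scale1r.
rewrite /logder_series mulr_sumr big_mkord; apply: eq_bigr => i _.
rewrite big_seq1 mulrBl -scalerAr -exprS mul_polyC scalerA /f.
by rewrite exprS invfM mulrA mulfV // mul1r.
Qed.

Lemma roots_poly_logder K s :
  0 \notin s -> 'X^K %| (roots_poly s)^`() + roots_poly s * logder_series K s.
Proof.
elim: s => [|y s IHs].
  rewrite /roots_poly /logder_series big_nil derivC add0r mul1r big1 // => i _.
  by rewrite big_nil scale0r.
rewrite inE negb_or eq_sym => /andP[y_neq0 /IHs dvd_s].
rewrite /roots_poly big_cons -/(roots_poly s) derivM derivXsubC logder_series_cons.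
set P := roots_poly s; set Ly := logder_series K [:: y]; set Ls := logder_series K s.
have -> : 1 * P + ('X - y%:P) * P^`() + ('X - y%:P) * P * (Ly + Ls) =
          ('X - y%:P) * (P^`() + P * Ls) + P * (1 + ('X - y%:P) * Ly) by ring.
rewrite /Ly mulXsubC_logder_series // [1 + _]addrC subrK -scalerAr.
by rewrite dvdp_add ?dvdp_mull // dvdpZr ?dvdp_mulIr // invr_eq0 expf_neq0.
Qed.

(* In characteristic 0, P' = - P T mod 'X^K is a recursion for P`_1, ..., P`_K. *)
Lemma logder_coef_eq0 K P T :
  'X^K %| P^`() + P * T -> P`_0 = 0 -> forall j, (j <= K)%N -> P`_j = 0.
Proof.
move=> dvdP P0; elim/ltn_ind=> [[|j] IHj jK] //.
have /eqP : (P^`() + P * T)`_j = 0.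
  by move: dvdP; rewrite dvdp_eq => /eqP ->; rewrite coefMXn jK.
rewrite coefD coef_deriv coefM big1 ?addr0 => [|[k /= kS] _]; last first.
  by rewrite IHj ?mul0r // ltnW // (leq_trans _ jK).
by rewrite -mulr_natr mulf_eq0 ((pcharf0P F).1 charF0) orbF => /eqP.
Qed.

Lemma logder_coef_proportional K P Q T j :
  'X^K %| P^`() + P * T -> 'X^K %| Q^`() + Q * T -> (j <= K)%N ->
  Q`_0 * P`_j = P`_0 * Q`_j.
Proof.
move=> dvdP dvdQ jK; apply/eqP; rewrite -subr_eq0; apply/eqP.
pose D := Q`_0 *: P - P`_0 *: Q.
have dvdD : 'X^K %| D^`() + D * T.
  have -> : D^`() + D * T = Q`_0 *: (P^`() + P * T) - P`_0 *: (Q^`() + Q * T).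
    by rewrite /D derivB !derivZ mulrBl -!scalerAl !scalerDr addrACA opprD.
  by rewrite -!mul_polyC dvdp_sub ?dvdp_mull.
have := logder_coef_eq0 dvdD _ jK; rewrite !coefB !coefZ; apply.
by rewrite mulrC subrr.
Qed.

Lemma roots_poly_coef0_neq0 s : 0 \notin s -> (roots_poly s)`_0 != 0.
Proof.
move=> s_0; rewrite coef0_prod_XsubC mulf_neq0 ?signr_eq0 // prodf_seq_neq0.
by apply/allP => y ys; apply: contraNneq s_0 => <-.
Qed.

Lemma roots_poly_coef_ge s j : (size s <= j)%N -> (roots_poly s)`_j = (j == size s)%:R.
Proof.
rewrite leq_eqVlt => /orP[/eqP <-|sj]; rewrite ?eqxx.
  by have := lead_coef_prod_XsubC s xpredT id; rewrite lead_coefE size_prod_XsubC.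
by rewrite nth_default ?size_prod_XsubC // gtn_eqF.
Qed.

Lemma perm_eq_inv_power_sums s1 s2 :
  size s1 = size s2 -> 0 \notin s1 -> 0 \notin s2 ->
  \sum_(y <- s1) y = \sum_(y <- s2) y -> \sum_(y <- s1) y != 0 ->
  (forall m, (0 < m < size s1)%N -> \sum_(y <- s1) y ^- m = \sum_(y <- s2) y ^- m) ->
  perm_eq s1 s2.
Proof.
move=> eq_size s1_0 s2_0 eq_sum sum_neq0 eq_inv.
have [K sizeK] : exists K, size s1 = K.+1.
  case: s1 {eq_size s1_0 eq_sum eq_inv} sum_neq0 => [|y s]; last by exists (size s).
  by rewrite big_nil eqxx.
have sizeK2 : size s2 = K.+1 by rewrite -eq_size.
have dvd1 := roots_poly_logder K s1_0; have dvd2 := roots_poly_logder K s2_0.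
have eq_logder : logder_series K s1 = logder_series K s2.
  by apply: eq_bigr => i _; rewrite eq_inv // sizeK !ltnS ltn_ord.
rewrite eq_logder in dvd1.
set P1 := roots_poly s1 in dvd1 *; set P2 := roots_poly s2 in dvd2 *.
have coefK s : size s = K.+1 -> (roots_poly s)`_K = - \sum_(y <- s) y.
  by move=> sizeKs; rewrite -[K]/(K.+1.-1) -sizeKs coefPn_prod_XsubC ?sizeKs.
have eq_coef0 : P1`_0 = P2`_0.
  have := logder_coef_proportional dvd1 dvd2 (leqnn K).
  rewrite !coefK // -eq_sum !mulrN => /oppr_inj /(mulIf sum_neq0).
  by move=> ->.
apply: prod_XsubC_eq; apply/polyP => j; have [jK | Kj] := leqP j K.
  apply: (mulfI (roots_poly_coef0_neq0 s2_0)).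
  by rewrite -/P2 (logder_coef_proportional dvd1 dvd2 jK) eq_coef0.
by rewrite !roots_poly_coef_ge ?sizeK ?sizeK2 // eq_size.
Qed.

End InversePowerSums.

Section FfunRcons.
Variables (T : finType) (m : nat).

Definition ffun_rcons (u : {ffun 'I_m -> T}) (x : T) : {ffun 'I_m.+1 -> T} :=
  [ffun i => if unlift ord_max i is Some j then u j else x].
Definition ffun_belast (t : {ffun 'I_m.+1 -> T}) : {ffun 'I_m -> T} :=
  [ffun j => t (widen_ord (leqnSn m) j)].

Lemma widen_ord_max (j : 'I_m) : widen_ord (leqnSn m) j = lift ord_max j.
Proof. by apply: val_inj; rewrite /= /bump leqNgt ltn_ord. Qed.

Lemma ffun_rcons_max u x : ffun_rcons u x ord_max = x.
Proof. by rewrite ffunE unlift_none. Qed.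

Lemma ffun_rcons_widen u x j : ffun_rcons u x (widen_ord (leqnSn m) j) = u j.
Proof. by rewrite widen_ord_max ffunE liftK. Qed.

Lemma ffun_rconsK x : cancel (ffun_rcons^~ x) ffun_belast.
Proof. by move=> u; apply/ffunP => j; rewrite ffunE ffun_rcons_widen. Qed.

Lemma ffun_belastK t : ffun_rcons (ffun_belast t) (t ord_max) = t.
Proof.
apply/ffunP => i; rewrite ffunE; case: unliftP => [j ->|-> //].
by rewrite ffunE widen_ord_max.
Qed.

End FfunRcons.

Section SquareProductCount.
Variables (gT : finGroupType) (G : {group gT}).

Definition sq_prod_count m (g : gT) : nat :=
  #|[set t : {ffun 'I_m -> gT} |
      [forall i, t i \in G] && ((\prod_(i < m) (t i) ^+ 2)%g == g)]|.

Lemma sq_prod_count0 g : sq_prod_count 0 g = (g == 1%g).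
Proof.
rewrite /sq_prod_count (eq_finset (fun t => (1%g == g))) => [|t].
  by rewrite eq_sym; case: eqP => _; rewrite ?cards0 // cardsT card_ffun card_ord.
by rewrite big_ord0 andb_idl // => _; apply/forallP => -[].
Qed.

Lemma sq_prod_countS m g :
  sq_prod_count m.+1 g = \sum_(x in G) sq_prod_count m (g * (x ^+ 2)^-1).
Proof.
rewrite /sq_prod_count -sum1dep_card.
rewrite (partition_big (fun t : {ffun 'I_m.+1 -> gT} => t ord_max) (mem G)); last first.
  by move=> t /andP[/forallP/(_ ord_max)].
apply: eq_bigr => x Gx; rewrite -sum1dep_card.
rewrite (reindex_onto (fun u : {ffun 'I_m -> gT} => ffun_rcons u x) (@ffun_belast _ m));
  last by move=> t /andP[_ /eqP <-]; rewrite ffun_belastK.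
apply: eq_bigl => u; rewrite ffun_rconsK eqxx andbT ffun_rcons_max eqxx andbT.
rewrite big_ord_recr /= ffun_rcons_max.
under eq_bigr do rewrite ffun_rcons_widen.
rewrite (can2_eq (mulgK _) (mulgKV _)); congr (_ && _).
apply/forallP/forallP => [Gt j | Gu i]; first by rewrite -(ffun_rcons_widen u x) Gt.
by rewrite ffunE; case: (unlift ord_max i).
Qed.

End SquareProductCount.

Lemma mulmx_delta_mxE (R : comNzRingType) m n p q
    (X : 'M[R]_(m, n)) (Y : 'M[R]_(p, q)) a b i j :
  (X *m delta_mx a b *m Y) i j = X i a * Y b j.
Proof.
by rewrite -(mul_delta_mx (0 : 'I_1)) mulmxA -colE -mulmxA -rowE mxE big_ord1 !mxE.
Qed.

Section FrobeniusSchur.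
Variables (gT : finGroupType) (G : {group gT}) (n : nat).
Variable rG : mx_representation algC G n.
Hypothesis irrG : mx_irreducible rG.
Local Notation chi := (cfRepr rG).
Implicit Types B M : 'M[algC]_n.

Definition invariant_form B := forall x, x \in G -> (rG x)^T *m B *m rG x = B.

Definition form_avg M := \sum_(x in G) (rG x)^T *m M *m rG x.

Lemma form_avg_invariant M : invariant_form (form_avg M).
Proof.
move=> y Gy; rewrite /form_avg mulmx_sumr mulmx_suml.
rewrite [RHS](reindex_inj (mulIg y)) /=; apply: eq_big => [x|x Gx]; first by rewrite groupMr.
by rewrite repr_mxM // trmx_mul !mulmxA.
Qed.

Lemma invariant_formJ B x :
  invariant_form B -> x \in G -> B *m rG x = (rG x^-1%g)^T *m B.
Proof.
move=> invB Gx; rewrite -{1}(invB x^-1%g) ?groupV //.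
by rewrite -!mulmxA -repr_mxM ?groupV // mulVg repr_mx1 mulmx1.
Qed.

Lemma invariant_form_unit B : invariant_form B -> B != 0 -> B \in unitmx.
Proof.
move=> invB B_neq0; have modB : mxmodule rG B.
  by apply/mxmoduleP => x Gx; rewrite invariant_formJ // submxMl.
by case/mx_irrP: irrG => _ /(_ B modB B_neq0); rewrite row_full_unit.
Qed.

(* A nondegenerate invariant form makes rG equivalent to its dual. *)
Lemma invariant_form_real B : invariant_form B -> B != 0 -> cfReal chi.
Proof.
move=> invB B_neq0; have uB := invariant_form_unit invB B_neq0.
apply/eqP/cfun_inP => x Gx; rewrite cfConjCE -char_inv ?cfRepr_char // !cfunE groupV Gx.
have -> : rG x = invmx B *m ((rG x^-1%g)^T *m B) by rewrite -invariant_formJ // mulKmx.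
by rewrite mxtrace_mulC -mulmxA mulmxV // mulmx1 mxtrace_tr.
Qed.

Lemma invariant_forms_proportional B C :
  invariant_form B -> B != 0 -> invariant_form C -> exists c, C = c *: B.
Proof.
move=> invB B_neq0 invC; have uB := invariant_form_unit invB B_neq0.
have cent : centgmx rG (invmx B *m C).
  apply/centgmxP => x Gx; rewrite -mulmxA invariant_formJ // !mulmxA.
  by rewrite -[(rG _)^T](mulmxK uB) -invariant_formJ // !mulmxA mulVmx // mul1mx.
have /is_scalar_mxP[c Ec] := mx_abs_irr_cent_scalar (groupC irrG) cent.
by exists c; rewrite -[C](mulKVmx uB) Ec mul_mx_scalar.
Qed.

Lemma form_avg_delta_trace_sq :
  \sum_a \sum_b (form_avg (delta_mx a b)) a b = \sum_(x in G) (\tr (rG x)) ^+ 2.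
Proof.
transitivity (\sum_a \sum_b \sum_(x in G) ((rG x)^T *m delta_mx a b *m rG x) a b).
  by apply: eq_bigr => a _; apply: eq_bigr => b _; rewrite summxE.
under eq_bigr do rewrite exchange_big /=.
rewrite exchange_big /=; apply: eq_bigr => x Gx; rewrite /mxtrace expr2 big_distrlr /=.
by apply: eq_bigr => a _; apply: eq_bigr => b _; rewrite mulmx_delta_mxE mxE.
Qed.

Lemma form_avg_delta_trace_mul :
  \sum_a \sum_b (form_avg (delta_mx a b)) b a = \sum_(x in G) \tr (rG x *m rG x).
Proof.
transitivity (\sum_a \sum_b \sum_(x in G) ((rG x)^T *m delta_mx a b *m rG x) b a).
  by apply: eq_bigr => a _; apply: eq_bigr => b _; rewrite summxE.
under eq_bigr do rewrite exchange_big /=.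
rewrite exchange_big /=; apply: eq_bigr => x Gx; rewrite /mxtrace.
by apply: eq_bigr => a _; rewrite mxE; apply: eq_bigr => b _; rewrite mulmx_delta_mxE mxE.
Qed.

Lemma FSind_cfRepr : FSind chi = #|G|%:R^-1 * \sum_(x in G) \tr (rG x *m rG x).
Proof.
congr (_ * _); apply: eq_bigr => x Gx.
by rewrite cfunE groupX // mulr1n expgS expg1 repr_mxM.
Qed.

Lemma FSind_cfRepr_nonreal : ~~ cfReal chi -> FSind chi = 0.
Proof.
move=> nonreal; rewrite FSind_cfRepr -form_avg_delta_trace_mul big1 ?mulr0 // => a _.
apply: big1 => b _; have /eqP -> : form_avg (delta_mx a b) == 0; last by rewrite mxE.
by apply: contraR nonreal; apply: invariant_form_real (form_avg_invariant _).
Qed.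

Lemma sum_trace_sq_real : cfReal chi -> \sum_(x in G) (\tr (rG x)) ^+ 2 = #|G|%:R.
Proof.
move=> real; have chi_irr : chi \in irr G by apply/irr_reprP; exists (Representation rG).
have : '[chi] = 1 by case/irrP: chi_irr => i ->; apply: cfnorm_irr.
rewrite cfdotE => /(congr1 (fun t => #|G|%:R * t)); rewrite mulr1 mulVKf ?neq0CG // => <-.
apply: eq_bigr => x Gx; rewrite -cfConjCE (eqP real).
by rewrite cfunE Gx mulr1n expr2.
Qed.

Lemma invariant_form_symmetric : cfReal chi ->
  exists2 c, c ^+ 2 = 1 & forall B, invariant_form B -> B^T = c *: B.
Proof.
move=> real.
have /existsP[a /existsP[b A_neq0]] : [exists a, exists b, form_avg (delta_mx a b) != 0].
  apply: contraTT (neq0CG G) => /existsPn none.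
  rewrite -(sum_trace_sq_real real) -form_avg_delta_trace_sq big1 ?eqxx // => a _.
  by rewrite big1 // => b _; have /existsPn/(_ b)/negPn/eqP -> := none a; rewrite mxE.
set A := form_avg _ in A_neq0; have invA : invariant_form A := form_avg_invariant _.
have [c AT] : exists c, A^T = c *: A.
  apply: invariant_forms_proportional => // x Gx.
  by rewrite -[in RHS](invA x Gx) !trmx_mul trmxK !mulmxA.
exists c => [|B invB].
  have : (c ^+ 2 - 1) *: A = 0.
    by rewrite scalerBl scale1r expr2 -scalerA -AT -linearZ /= -AT trmxK subrr.
  by move/eqP; rewrite scaler_eq0 (negPf A_neq0) orbF subr_eq0 => /eqP.
have [d ->] := invariant_forms_proportional invA A_neq0 invB.
by rewrite linearZ /= AT scalerA mulrC -scalerA.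
Qed.

Lemma FSind_cfRepr_real : cfReal chi -> FSind chi ^+ 2 = 1.
Proof.
move=> real; have [c c2 symm] := invariant_form_symmetric real; suff -> : FSind chi = c by [].
rewrite FSind_cfRepr -form_avg_delta_trace_mul.
have -> : \sum_a \sum_b (form_avg (delta_mx a b)) b a =
          c * \sum_a \sum_b (form_avg (delta_mx a b)) a b.
  rewrite mulr_sumr; apply: eq_bigr => a _; rewrite mulr_sumr; apply: eq_bigr => b _.
  have /(congr1 (fun M => M a b)) := symm _ (form_avg_invariant (delta_mx a b)).
  by rewrite !mxE.
by rewrite form_avg_delta_trace_sq sum_trace_sq_real // mulrCA mulVf ?neq0CG ?mulr1.
Qed.

(* Schur's lemma; the scalar is read off from the trace. *)
Lemma sum_repr_sq_scalar :
  \sum_(x in G) rG x *m rG x = (FSind chi * #|G|%:R / n%:R)%:M.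
Proof.
have cent : centgmx rG (\sum_(x in G) rG x *m rG x).
  apply/centgmxP => y Gy; rewrite mulmx_suml mulmx_sumr.
  rewrite [RHS](reindex_inj (conjg_inj y)) /=.
  apply: eq_big => [x|x Gx]; first by rewrite groupJr.
  rewrite -!repr_mxM ?groupM ?groupJ ?groupV //.
  by rewrite !conjgE !mulgA mulgV mul1g mulgK.
have /is_scalar_mxP[c Ec] := mx_abs_irr_cent_scalar (groupC irrG) cent.
have n_neq0 : n%:R != 0 :> algC by case/mx_irrP: irrG => n_gt0 _; rewrite pnatr_eq0 -lt0n.
have tr_sum : \sum_(x in G) \tr (rG x *m rG x) = c *+ n.
  by rewrite -raddf_sum /= Ec mxtrace_scalar.
rewrite Ec FSind_cfRepr [_^-1 * _ * _]mulrAC mulVf ?neq0CG // mul1r tr_sum.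
by rewrite -[c *+ n]mulr_natr mulfK.
Qed.

Lemma cfRepr_sum_mul_sqV g : g \in G ->
  \sum_(x in G) chi (g * (x ^+ 2)^-1)%g = FSind chi * #|G|%:R / chi 1%g * chi g.
Proof.
move=> Gg; rewrite cfRepr1 (reindex_inj invg_inj) /=.
transitivity (\sum_(x in G) \tr (rG g *m (rG x *m rG x))).
  apply: eq_big => [x|x]; rewrite groupV // => Gx.
  by rewrite expVgn invgK cfunE groupM ?groupX // mulr1n expgS expg1 !repr_mxM ?groupM.
rewrite -raddf_sum /= -mulmx_sumr sum_repr_sq_scalar mul_mx_scalar mxtraceZ.
by rewrite cfunE Gg mulr1n.
Qed.

End FrobeniusSchur.

Lemma sqr1_rescale (F : fieldType) (d u g : F) m :
  u ^+ 2 = 1 -> d ^+ 2 * (u * g / d) ^+ m = (d * u) ^+ 2 * (g / (d * u)) ^+ m.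
Proof.
move=> u2; have u_neq0 : u != 0.
  by apply: contra_eq_neq u2 => ->; rewrite expr0n eq_sym oner_eq0.
have uV : u^-1 = u by apply: (mulfI u_neq0); rewrite mulfV // -expr2 u2.
by rewrite [(d * u) ^+ 2]exprMn u2 mulr1 invfM uV; congr (_ * _ ^+ m); ring.
Qed.

Section SquareCountCharacters.
Variables (gT : finGroupType) (G : {group gT}).

Lemma FSind_irr_nonreal i : ~~ cfReal 'chi[G]_i -> FSind 'chi[G]_i = 0.
Proof. by rewrite -irrRepr; apply/FSind_cfRepr_nonreal/socle_irr. Qed.

Lemma FSind_irr_real i : cfReal 'chi[G]_i -> FSind 'chi[G]_i ^+ 2 = 1.
Proof. by rewrite -irrRepr; apply/FSind_cfRepr_real/socle_irr. Qed.

Lemma sq_prod_count_irr m g : g \in G ->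
  #|G|%:R * (sq_prod_count G m g)%:R =
  \sum_i 'chi[G]_i 1%g * 'chi_i g * (FSind 'chi_i * #|G|%:R / 'chi_i 1%g) ^+ m.
Proof.
elim: m g => [|m IHm] g Gg.
  under eq_bigr do rewrite expr0 mulr1.
  have /(congr1 (fun phi : 'CF(G) => phi g)) := cfReg_sum G.
  rewrite cfRegE sum_cfunE sq_prod_count0 mulr_natr => ->.
  by apply: eq_bigr => i _; rewrite cfunE.
rewrite sq_prod_countS natr_sum mulr_sumr.
under eq_bigr => x Gx do rewrite IHm ?groupM ?groupV ?groupX //.
rewrite exchange_big /=; apply: eq_bigr => i _.
under eq_bigr do rewrite mulrAC.
rewrite -mulr_sumr -irrRepr cfRepr_sum_mul_sqV //; last exact: socle_irr.
by rewrite exprS; ring.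
Qed.

Lemma sq_count_degFS m : (0 < m)%N ->
  #|G|%:R * (sq_count G m)%:R = \sum_(y <- degFS G) y ^+ 2 * (#|G|%:R / y) ^+ m.
Proof.
move=> m_gt0; rewrite [sq_count G m]/(sq_prod_count G m 1) sq_prod_count_irr //.
rewrite (bigID (mem (IrrR G))) /= [X in _ + X]big1 ?addr0 => [|i]; last first.
  by rewrite inE => /FSind_irr_nonreal ->; rewrite !mul0r expr0n gtn_eqF // mulr0.
rewrite /degFS big_map big_enum /=; apply: eq_bigr => i; rewrite inE => /FSind_irr_real.
by rewrite -expr2; apply: sqr1_rescale.
Qed.

Lemma degFS_neq0 : 0 \notin degFS G.
Proof.
apply/mapP => -[i]; rewrite mem_enum inE => /FSind_irr_real FS2 /esym/eqP.
rewrite mulf_eq0 (negPf (irr1_neq0 i)) /= => /eqP FS0.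
by move: FS2; rewrite FS0 expr0n /= => /eqP; rewrite eq_sym oner_eq0.
Qed.

Lemma size_degFS : size (degFS G) = kr G.
Proof. by rewrite size_map -cardE. Qed.

Lemma sum_degFS : \sum_(y <- degFS G) y = (sq_count G 1)%:R.
Proof.
apply: (mulfI (neq0CG G)); rewrite sq_count_degFS // mulr_sumr big_seq.
rewrite [RHS]big_seq; apply: eq_bigr => y y_degFS.
have y_neq0 : y != 0 by apply: contraNneq degFS_neq0 => <-.
by rewrite expr1; field.
Qed.

Lemma sum_degFS_exprVn m :
  #|G|%:R ^+ m.+1 * \sum_(y <- degFS G) y ^- m = (sq_count G m.+2)%:R.
Proof.
apply: (mulfI (neq0CG G)); rewrite sq_count_degFS // mulrA -exprS mulr_sumr big_seq.
rewrite [RHS]big_seq; apply: eq_bigr => y y_degFS.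
have y_neq0 : y != 0 by apply: contraNneq degFS_neq0 => <-.
by rewrite expr_div_n -addn2 !exprD; field; rewrite y_neq0 expf_neq0.
Qed.

Lemma sq_count1_gt0 : (0 < sq_count G 1)%N.
Proof.
apply/card_gt0P; exists [ffun=> 1%g]; rewrite inE; apply/andP; split.
  by apply/forallP => i; rewrite ffunE group1.
by rewrite big_ord1 ffunE expg1n.
Qed.

End SquareCountCharacters.

Theorem theoremA (gT hT : finGroupType) (G : {group gT}) (H : {group hT}) :
  #|G| = #|H| ->
  kr G = kr H ->
  (forall n : nat, (1 <= n <= (kr G).+1)%N -> sq_count G n = sq_count H n) ->
  perm_eq (degFS G) (degFS H) /\ sq_count G 2 = (kr G * #|G|)%N.
Proof.
move=> oGH krGH sGH; split.
  apply: (perm_eq_inv_power_sums Cpchar); rewrite ?size_degFS ?degFS_neq0 //.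
  - by rewrite !sum_degFS sGH.
  - by rewrite sum_degFS pnatr_eq0 -lt0n sq_count1_gt0.
  move=> m /andP[m_gt0 m_lt_kr]; apply: (mulfI (expf_neq0 m.+1 (neq0CG G))).
  by rewrite sum_degFS_exprVn oGH sum_degFS_exprVn sGH.
apply/eqP; rewrite -(eqr_nat algC) -sum_degFS_exprVn /degFS big_map big_enum /=.
under eq_bigr do rewrite expr0 invr1.
by rewrite sumr_const expr1 natrM mulrC.
Qed.
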